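(* Suppose there is $K>0$ such that $\|\nabla_{(\theta,x)}\ell(\theta,x)-\nabla_{(\theta,x)}\ell(\theta',x')\|\le K\|(\theta,x)-(\theta',x')\|$ for all $(\theta,x),(\theta',x')\in\mathbb{R}^{d_\theta}\times\mathbb{R}^{d_x}$. Fix $\eta_\theta,\gamma_\theta,\eta_x,\gamma_x>0$ and define $b:\mathbb{R}^{2d_x}\times\mathbb{R}^{2d_\theta}\times\mathcal{P}(\mathbb{R}^{2d_x})\to\mathbb{R}^{2d_\theta+2d_x}$ by $$b((x,u),(\theta,m),q)=\begin{pmatrix}\eta_\theta m\\-\gamma_\theta\eta_\theta m-\nabla_\theta\mathcal{F}(\theta,q)\\\eta_xu\\-\gamma_x\eta_xu+\nabla_x\ell(\theta,x)\end{pmatrix}.$$ Then there is a constant $K_b>0$ such that $$\|b(\Upsilon,\vartheta,q)-b(\Upsilon',\vartheta',q')\|\le K_b\big(\|\Upsilon-\Upsilon'\|+\|\vartheta-\vartheta'\|+\mathsf{W}_1(q,q')\big)$$ for all $\Upsilon,\Upsilon'\in\mathbb{R}^{2d_x}$, $\vartheta,\vartheta'\in\mathbb{R}^{2d_\theta}$ and $q,q'\in\mathcal{P}(\mathbb{R}^{2d_x})$.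
   Context: $\ell(\theta,x)=\log p_\theta(y,x)$ for a latent variable model with fixed data $y$. $\mathcal{P}(\mathbb{R}^{2d_x})$: probability measures on $\mathbb{R}^{d_x}\times\mathbb{R}^{d_x}$ with Lebesgue density and finite second moment; $\mathsf{W}_1$ is the Wasserstein-1 distance. $\nabla_\theta\mathcal{F}(\theta,q):=-\int\nabla_\theta\ell(\theta,x)\,q(\mathrm{d}x,\mathrm{d}u)$. Points are written $\Upsilon=(x,u)$ and $\vartheta=(\theta,m)$. *)

From HB Require Import structures.
From mathcomp Require Import all_boot all_order all_algebra.
From mathcomp Require Import all_classical all_reals all_analysis.
Set Implicit Arguments. Unset Strict Implicit. Unset Printing Implicit Defensive.
Import Order.TTheory GRing.Theory Num.Theory.
Import numFieldNormedType.Exports.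
Local Open Scope classical_set_scope.
Local Open Scope ring_scope.

(* Borel sigma-algebra on R^n = 'rV[R]_n : generated by the coordinates *)
(* (the product Borel sigma-algebra, which is the Borel sigma-algebra  *)
(* of R^n).                                                            *)
Definition rV_measure_display : measure_display -> measure_display.
Proof. exact. Qed.

Section measurable_rV.
Variables (R : realType) (n : nat).
Let coords : 'I_n -> 'rV[R]_n -> R := fun i v => v 0 i.
Let rV_set0 : g_sigma_preimage coords set0.
Proof. exact: sigma_algebra0. Qed.
Let rV_setC A : g_sigma_preimage coords A -> g_sigma_preimage coords (~` A).
Proof. exact: sigma_algebraC. Qed.
Let rV_bigcup (F : _^nat) : (forall i, g_sigma_preimage coords (F i)) ->
  g_sigma_preimage coords (\bigcup_i (F i)).
Proof. exact: sigma_algebra_bigcup. Qed.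
HB.instance Definition _ := @isMeasurable.Build
  (rV_measure_display default_measure_display)
  ('rV[R]_n) (g_sigma_preimage coords) rV_set0 rV_setC rV_bigcup.
End measurable_rV.

Section defs.
Variable R : realType.

Definition enorm (n : nat) (v : 'rV[R]_n) : R :=
  Num.sqrt (\sum_(i < n) v 0 i ^+ 2).

Definition grad (n : nat) (f : 'rV[R]_n -> R) (z : 'rV[R]_n) : 'rV[R]_n :=
  \row_i ('D_(delta_mx 0 i) f z).

(* points Upsilon = (x,u) of R^{dx} x R^{dx}, viewed in R^{2dx} *)
Definition pt (dx : nat) (Y : 'rV[R]_dx * 'rV[R]_dx) : 'rV[R]_(dx + dx) :=
  row_mx Y.1 Y.2.

(* Iterated Lebesgue integral over R^n of a function of the n coordinates
   (by Tonelli this is the integral w.r.t. Lebesgue measure on R^n for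
   nonnegative measurable integrands). *)
Fixpoint lebint (n : nat) : (('I_n -> R) -> \bar R) -> \bar R :=
  match n with
  | 0 => fun f => f (fun _ => 0)
  | n'.+1 => fun f =>
      (\int[@lebesgue_measure R]_x
         lebint (fun g : 'I_n' -> R =>
           f (fun i : 'I_n'.+1 => if unlift ord0 i is Some j then g j else x)))%E
  end.

Definition pt_of_coords (dx : nat) (g : 'I_(dx + dx) -> R)
  : 'rV[R]_dx * 'rV[R]_dx :=
  (\row_i g (lshift dx i), \row_i g (rshift dx i)).

Definition Tx (dx : nat) := ('rV[R]_dx * 'rV[R]_dx)%type.

Definition has_lebesgue_density (dx : nat) (q : probability (Tx dx) R) :=
  exists f : Tx dx -> R,
    (forall z, 0 <= f z) /\ measurable_fun setT f /\
    forall A : set (Tx dx), measurable A ->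
      q A = lebint (fun g => ((\1_A (pt_of_coords g) : R)
                                * f (pt_of_coords g))%:E).

(* P(R^{2dx}) : probability measures with Lebesgue density and
   finite second moment *)
Definition P2 (dx : nat) (q : probability (Tx dx) R) : Prop :=
  has_lebesgue_density q /\
  (\int[q]_z ((enorm (pt z)) ^+ 2)%:E < +oo)%E.

Definition coupling (dx : nat) (q q' : probability (Tx dx) R)
  (pi : probability (Tx dx * Tx dx)%type R) : Prop :=
  (forall A, measurable A -> pi (A `*` setT) = q A) /\
  (forall B, measurable B -> pi (setT `*` B) = q' B).

Definition W1 (dx : nat) (q q' : probability (Tx dx) R) : \bar R :=
  ereal_inf [set (\int[pi]_p (enorm (pt p.1 - pt p.2))%:E)%E
            | pi in [set pi | coupling q q' pi]].

(* nabla_theta F(theta, q) = - int nabla_theta l(theta, x) q(dx, du),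
   l : R^{dth + dx} -> R evaluated at (theta, x) = row_mx theta x *)
Definition gradF (dth dx : nat) (l : 'rV[R]_(dth + dx) -> R)
  (th : 'rV[R]_dth) (q : probability (Tx dx) R) : 'rV[R]_dth :=
  - \row_i Rintegral q setT
          (fun z : Tx dx => lsubmx (grad l (row_mx th z.1)) 0 i).

Definition drift (dth dx : nat) (l : 'rV[R]_(dth + dx) -> R)
  (eta_th gam_th eta_x gam_x : R)
  (Y : 'rV[R]_dx * 'rV[R]_dx) (V : 'rV[R]_dth * 'rV[R]_dth)
  (q : probability (Tx dx) R) : 'rV[R]_(dth + dth + dx + dx) :=
  row_mx (row_mx (row_mx
    (eta_th *: V.2)
    (- (gam_th * eta_th) *: V.2 - gradF l V.1 q))
    (eta_x *: Y.2))
    (- (gam_x * eta_x) *: Y.2 + rsubmx (grad l (row_mx V.1 Y.1))).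

End defs.

From HB Require Import structures.
From mathcomp Require Import all_boot all_order all_algebra.
From mathcomp Require Import all_classical all_reals all_analysis.
From mathcomp Require Import ring lra zify measurable_realfun.
Import Order.TTheory GRing.Theory Num.Theory.
Import numFieldNormedType.Exports.
Local Open Scope classical_set_scope.
Local Open Scope ring_scope.
Set Implicit Arguments. Unset Strict Implicit. Unset Printing Implicit Defensive.

(* Each block of the drift is Lipschitz.  The momentum blocks are linear and
   the block [grad_x l] inherits the Lipschitz bound of [grad l].  The block
   [gradF] is an integral of [grad_theta], which is Lipschitz both in theta
   and in the integration variable; integrating the latter bound against any
   coupling of [q] and [q'] bounds the difference of the two integrals by its
   transport cost, and the infimum over couplings is [W1 q q'].  All estimates
   are made in the l1 norm, which is comparable to [enorm] up to the
   dimension. *)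

Section l1norm.
Variable R : realType.
Implicit Types (m : nat).

Definition l1norm m (v : 'rV[R]_m) : R := \sum_(i < m) `|v 0 i|.

Lemma l1norm_ge0 m (v : 'rV[R]_m) : 0 <= l1norm v.
Proof. exact: sumr_ge0. Qed.

Lemma l1norm0 m : l1norm (0 : 'rV[R]_m) = 0.
Proof. by rewrite /l1norm big1 // => i _; rewrite mxE normr0. Qed.

Lemma l1normN m (v : 'rV[R]_m) : l1norm (- v) = l1norm v.
Proof. by apply: eq_bigr => i _; rewrite mxE normrN. Qed.

Lemma l1normZ m c (v : 'rV[R]_m) : l1norm (c *: v) = `|c| * l1norm v.
Proof. by rewrite /l1norm mulr_sumr; apply: eq_bigr => i _; rewrite mxE normrM. Qed.

Lemma l1normD m (u v : 'rV[R]_m) : l1norm (u + v) <= l1norm u + l1norm v.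
Proof. by rewrite /l1norm -big_split; apply: ler_sum => i _; rewrite mxE ler_normD. Qed.

Lemma l1normDB m (u u' v v' : 'rV[R]_m) :
  l1norm ((u + v) - (u' + v')) <= l1norm (u - u') + l1norm (v - v').
Proof. by rewrite opprD addrACA l1normD. Qed.

Lemma l1normZB m c (u u' : 'rV[R]_m) :
  l1norm (c *: u - c *: u') = `|c| * l1norm (u - u').
Proof. by rewrite -scalerBr l1normZ. Qed.

Lemma l1norm_row_mx m1 m2 (u : 'rV[R]_m1) (v : 'rV[R]_m2) :
  l1norm (row_mx u v) = l1norm u + l1norm v.
Proof.
rewrite /l1norm big_split_ord; congr (_ + _).
  by apply: eq_bigr => i _; rewrite row_mxEl.
by apply: eq_bigr => i _; rewrite row_mxEr.
Qed.

Lemma l1norm_rsubmx m1 m2 (v : 'rV[R]_(m1 + m2)) : l1norm (rsubmx v) <= l1norm v.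
Proof. by rewrite -{2}(hsubmxK v) l1norm_row_mx lerDr l1norm_ge0. Qed.

Lemma enorm_ge0 m (v : 'rV[R]_m) : 0 <= enorm v.
Proof. exact: sqrtr_ge0. Qed.

Lemma coord_le_enorm m (v : 'rV[R]_m) i : `|v 0 i| <= enorm v.
Proof.
rewrite /enorm -(sqrtr_sqr (v 0 i)) ler_sqrt; last by apply: sumr_ge0 => j _; exact: sqr_ge0.
by rewrite (bigD1 i) //= lerDl; apply: sumr_ge0 => j _; exact: sqr_ge0.
Qed.

Lemma enorm_le_l1norm m (v : 'rV[R]_m) : enorm v <= l1norm v.
Proof.
rewrite /enorm -(ger0_norm (l1norm_ge0 v)) -sqrtr_sqr ler_sqrt ?sqr_ge0 //.
rewrite expr2 {1}/l1norm mulr_suml; apply: ler_sum => i _.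
rewrite -real_normK ?num_real // expr2 ler_wpM2l //.
by rewrite /l1norm (bigD1 i) //= lerDl sumr_ge0.
Qed.

Lemma l1norm_le_enorm m (v : 'rV[R]_m) : l1norm v <= m%:R * enorm v.
Proof.
have -> : m%:R * enorm v = \sum_(i < m) enorm v by rewrite sumr_const card_ord mulr_natl.
by apply: ler_sum => i _; exact: coord_le_enorm.
Qed.

End l1norm.

Section rV_measurability.
Variable R : realType.
Implicit Types (m : nat).

Lemma measurable_coord m (i : 'I_m) :
  measurable_fun setT (fun v : 'rV[R]_m => v 0 i).
Proof.
move=> _ B mB; rewrite setTI; apply: sub_sigma_algebra.
by rewrite (bigD1 i) //=; left; exists B => //; rewrite setTI.
Qed.

Lemma measurable_enorm d (T : measurableType d) m (g : T -> 'rV[R]_m) :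
  (forall j, measurable_fun setT (fun t => g t 0 j)) ->
  measurable_fun setT (fun t => enorm (g t)).
Proof.
move=> mg; apply: measurableT_comp (continuous_measurable_fun (@sqrt_continuous R)) _.
by apply: measurable_sum => j; exact: measurable_funX.
Qed.

Definition cube m (c : 'rV[R]_m) (r : R) : set 'rV[R]_m :=
  [set v | forall i, `|v 0 i - c 0 i| < r].

Lemma measurable_cube m (c : 'rV[R]_m) r : measurable (cube c r).
Proof.
have -> : cube c r = \bigcap_(i in [set: 'I_m])
    ((fun v : 'rV[R]_m => v 0 i) @^-1` `](c 0 i - r), (c 0 i + r)[%classic).
  apply/seteqP; split => v /= hv i; rewrite /preimage /=.
    by move=> _; rewrite in_itv /= -ltr_distl.
  by have := hv i I; rewrite /preimage /= in_itv /= -ltr_distl.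
apply: fin_bigcap_measurable; first exact: finite_finset.
by move=> i _; rewrite -[X in measurable X]setTI; apply: measurable_coord.
Qed.

Lemma l1norm_cube m (c v : 'rV[R]_m) r : cube c r v -> l1norm (v - c) <= m%:R * r.
Proof.
move=> cv; have -> : m%:R * r = \sum_(i < m) r by rewrite sumr_const card_ord mulr_natl.
by apply: ler_sum => i _; rewrite !mxE; exact: ltW (cv i).
Qed.

Lemma rat_cube_center m (v : 'rV[R]_m) r : 0 < r ->
  exists p : {ffun 'I_m -> rat}, cube (\row_i ratr (p i)) r v.
Proof.
move=> r0.
have [p hp] : exists p : 'I_m -> rat, forall i, `|v 0 i - ratr (p i)| < r.
  apply: (@fin_all_exists _ (fun=> rat) (fun i (q : rat) => `|v 0 i - ratr q| < r)) => i.
  have /rat_in_itvoo[q] : v 0 i - r < v 0 i + r by lra.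
  by rewrite in_itv /= => hq; exists q; rewrite distrC ltr_distl.
by exists [ffun i => p i] => i; rewrite !mxE ffunE.
Qed.

(* The sigma-algebra on 'rV is generated by the coordinates, so we argue by
   hand: {a < f} is a countable union of cubes with rational centres and
   radii. *)
Lemma l1norm_lipschitz_measurable m (f : 'rV[R]_m -> R) (L : R) : 0 <= L ->
  (forall u v, `|f u - f v| <= L * l1norm (u - v)) -> measurable_fun setT f.
Proof.
move=> L0 f_lip.
apply: (measurability _ (measurable_realfun.RGenOInfty.measurableE R)) => //.
move=> _ [_ [a ->] <-]; rewrite setTI.
pose center (p : {ffun 'I_m -> rat}) : 'rV[R]_m := \row_i ratr (p i).
have f_cube c r v : cube c r v -> `|f v - f c| <= L * (m%:R * r).
  by move=> /l1norm_cube hv; apply: le_trans (f_lip v c) _; exact: ler_wpM2l.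
rewrite (_ : _ @^-1` _ = \bigcup_(pr : {ffun 'I_m -> rat} * rat)
    (if (0 < ratr pr.2 :> R) && (a < f (center pr.1) - L * (m%:R * ratr pr.2))
     then cube (center pr.1) (ratr pr.2) else set0)).
  apply: countable_bigcupT_measurable; first exact: countableP.
  by move=> pr; case: ifP => _ //; exact: measurable_cube.
apply/seteqP; split => [v|v [pr _]]; rewrite /= in_itv /= andbT; last first.
  by case: ifP => // /andP[_ ha] /f_cube; rewrite ler_distl => /andP[+ _]; lra.
move=> av.
have Lm0 : 0 <= L * m%:R by rewrite mulr_ge0.
pose e := (f v - a) / (2 * (L * m%:R) + 1).
have e0 : 0 < e by rewrite divr_gt0 // ?subr_gt0 //; lra.
have eE : 2 * (L * m%:R * e) + e = f v - a.
  by rewrite -[RHS](mulfVK (_ : 2 * (L * m%:R) + 1 != 0)) -/e; [ring | rewrite gt_eqF //; lra].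
have [r] := rat_in_itvoo e0; rewrite in_itv /= => /andP[r0 re].
have [p hp] := rat_cube_center v r0.
exists (p, r) => //=; rewrite r0 /= ifT // /center.
have := f_cube _ _ _ hp; rewrite ler_distl => /andP[_ fvp].
have : L * (m%:R * ratr r) <= L * m%:R * e by rewrite mulrA ler_wpM2l // ltW.
lra.
Qed.

End rV_measurability.

Section Rintegral_bounds.
Context d (T : measurableType d) (R : realType) (mu : {measure set T -> \bar R}).

Lemma le_normr_RintegralB (f g k : T -> R) :
  mu.-integrable setT (EFin \o f) -> mu.-integrable setT (EFin \o g) ->
  mu.-integrable setT (EFin \o k) -> (forall x, `|f x - g x| <= k x) ->
  `|\int[mu]_x f x - \int[mu]_x g x| <= \int[mu]_x k x.
Proof.
move=> intf intg intk fgk.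
have intfg : mu.-integrable setT (EFin \o (fun x => f x - g x)).
  by apply: eq_integrable (integrableB measurableT intf intg) => // x _; rewrite /= EFinB.
have intfg_abs : mu.-integrable setT (EFin \o (fun x => `|f x - g x|)).
  apply: le_integrable intk => // [|x _].
    apply/measurable_EFinP/measurableT_comp; first exact: normr_measurable.
    by case/integrableP: intfg => /measurable_EFinP.
  by rewrite /= lee_fin normr_id (le_trans (fgk x) (ler_norm _)).
rewrite -RintegralB //; apply: le_trans (le_normr_Rintegral measurableT intfg) _.
by apply: le_Rintegral => // x _; exact: fgk.
Qed.

End Rintegral_bounds.

Section marginal.
Context d1 d2 (T1 : measurableType d1) (T2 : measurableType d2) (R : realType).
Variables (pi : {measure set T1 -> \bar R}) (q : {measure set T2 -> \bar R}).
Variables (phi : T1 -> T2) (mphi : measurable_fun setT phi).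
Hypothesis pi_phi : forall A, measurable A -> pi (phi @^-1` A) = q A.

Let integral_marginal (f : T2 -> \bar R) :
  (\int[q]_z f z = \int[pushforward pi phi]_z f z)%E.
Proof. by apply: eq_measure_integral => A mA _; rewrite /= /pushforward pi_phi. Qed.

Lemma integrable_marginal (h : T2 -> R) : q.-integrable setT (EFin \o h) ->
  pi.-integrable setT (EFin \o (h \o phi)).
Proof.
move=> /integrableP[mh hfin]; apply/integrableP; split.
  by apply/measurable_EFinP/measurableT_comp => //; exact/measurable_EFinP.
rewrite [X in (X < _)%E](_ : _ = \int[q]_z `|(h z)%:E|)%E //.
rewrite integral_marginal ge0_integral_pushforward ?preimage_setT //.
exact: measurableT_comp.
Qed.

Lemma Rintegral_marginal (h : T2 -> R) : q.-integrable setT (EFin \o h) ->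
  \int[q]_z h z = \int[pi]_x h (phi x).
Proof.
move=> /[dup] /integrableP[mh _] inth.
rewrite /Rintegral integral_marginal integral_pushforward ?preimage_setT //.
exact: integrable_marginal.
Qed.

End marginal.

Section transport.
Variables (R : realType) (dx : nat).
Implicit Types (q : probability (Tx R dx) R)
  (pi : probability (Tx R dx * Tx R dx)%type R).

Lemma measurable_pt_coord d (T : measurableType d) (g : T -> Tx R dx) :
  measurable_fun setT g -> forall j, measurable_fun setT (fun t => pt (g t) 0 j).
Proof.
move=> mg j; rewrite /pt; case: (split_ordP j) => i ->.
- under eq_fun do rewrite row_mxEl.
  exact: measurableT_comp (measurable_coord i) (measurableT_comp measurable_fst mg).
- under eq_fun do rewrite row_mxEr.
  exact: measurableT_comp (measurable_coord i) (measurableT_comp measurable_snd mg).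
Qed.

Lemma measurable_enorm_pt : measurable_fun setT (fun z : Tx R dx => enorm (pt z)).
Proof. exact: measurable_enorm (measurable_pt_coord (@measurable_id _ (Tx R dx) setT)). Qed.

Lemma measurable_enorm_ptB :
  measurable_fun setT (fun p : Tx R dx * Tx R dx => enorm (pt p.1 - pt p.2)).
Proof.
apply: measurable_enorm => j.
rewrite (_ : (fun p => _) = fun p => pt p.1 0 j - pt p.2 0 j); last first.
  by apply: funext => p; rewrite !mxE.
exact: measurable_funB (measurable_pt_coord measurable_fst j)
  (measurable_pt_coord measurable_snd j).
Qed.

Definition transport_cost pi : \bar R :=
  (\int[pi]_p (enorm (pt p.1 - pt p.2))%:E)%E.

Lemma transport_cost_ge0 pi : (0 <= transport_cost pi)%E.
Proof. by apply: integral_ge0 => p _; rewrite lee_fin enorm_ge0. Qed.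

Lemma P2_integrable q (h : Tx R dx -> R) (c L : R) : P2 q -> 0 <= L ->
  measurable_fun setT h -> (forall z, `|h z| <= c + L * enorm (pt z)) ->
  q.-integrable setT (EFin \o h).
Proof.
move=> [_ moment2] L0 mh h_growth.
have int_sq : q.-integrable setT (fun z => (enorm (pt z) ^+ 2)%:E).
  apply/integrableP; split.
    by apply/measurable_EFinP/measurable_funX; exact: measurable_enorm_pt.
  by under eq_integral do rewrite gee0_abs ?lee_fin ?sqr_ge0 //.
have int_dom : q.-integrable setT
    (fun z => (`|c| + L)%:E + L%:E * (enorm (pt z) ^+ 2)%:E)%E.
  apply: integrableD => //; first exact: finite_measure_integrable_cst.
  exact: integrableZl.
apply: le_integrable int_dom => // [|z _]; first exact/measurable_EFinP.
rewrite -EFinM -EFinD /comp !abse_EFin lee_fin (le_trans (h_growth z)) //.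
have e0 := enorm_ge0 (pt z).
have Le2 := mulr_ge0 L0 (sqr_ge0 (enorm (pt z))).
have Le : L * enorm (pt z) <= L + L * enorm (pt z) ^+ 2.
  by rewrite -[X in _ <= X + _]mulr1 -mulrDr ler_wpM2l //; nra.
have c_abs := ler_norm c; have abs_c0 := normr_ge0 c.
by rewrite ger0_norm; lra.
Qed.

Section coupling.
Variables (q q' : probability (Tx R dx) R)
  (pi : probability (Tx R dx * Tx R dx)%type R).
Hypothesis pi_coupling : coupling q q' pi.

Lemma coupling_fst A : measurable A -> pi (fst @^-1` A) = q A.
Proof.
by move=> mA; rewrite -pi_coupling.1 //; congr (pi _); apply/seteqP; split=> -[x y] //= [].
Qed.

Lemma coupling_snd A : measurable A -> pi (snd @^-1` A) = q' A.
Proof.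
by move=> mA; rewrite -pi_coupling.2 //; congr (pi _); apply/seteqP; split=> -[x y] //= [].
Qed.

Lemma lipschitz_Rintegral_coupling (h : Tx R dx -> R) (L : R) : 0 <= L ->
  q.-integrable setT (EFin \o h) -> q'.-integrable setT (EFin \o h) ->
  (forall z z', `|h z - h z'| <= L * enorm (pt z - pt z')) ->
  (transport_cost pi < +oo)%E ->
  `|\int[q]_z h z - \int[q']_z h z| <= L * fine (transport_cost pi).
Proof.
move=> L0 intq intq' h_lip cost_fin.
have int_dist : pi.-integrable setT
    (EFin \o (fun p : Tx R dx * Tx R dx => enorm (pt p.1 - pt p.2))).
  apply/integrableP; split; first by apply/measurable_EFinP; exact: measurable_enorm_ptB.
  by under eq_integral do rewrite /comp gee0_abs ?lee_fin ?enorm_ge0 //.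
rewrite (Rintegral_marginal measurable_fst coupling_fst intq).
rewrite (Rintegral_marginal measurable_snd coupling_snd intq').
rewrite -RintegralZl //; apply: le_normr_RintegralB => //.
- by have := integrable_marginal measurable_fst coupling_fst intq.
- by have := integrable_marginal measurable_snd coupling_snd intq'.
- by apply: eq_integrable (integrableZl measurableT L int_dist) => // p _; rewrite /= EFinM.
Qed.

End coupling.

Lemma le_W1 (q q' : probability (Tx R dx) R) (x a C : R) : 0 < C ->
  (forall pi, coupling q q' pi -> (transport_cost pi < +oo)%E ->
     x <= C * (a + fine (transport_cost pi))) ->
  (x%:E <= C%:E * (a%:E + W1 q q'))%E.
Proof.
move=> C0 x_le.
have W1_ge0 : (0 <= W1 q q')%E.
  by apply: le_ereal_inf_tmp => _ [pi _ <-]; exact: transport_cost_ge0.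
have [->|W1_fin] := eqVneq (W1 q q') +oo%E.
  by rewrite addey // gt0_muley ?lte_fin // leey.
have [w W1w] : exists w, W1 q q' = w%:E.
  by exists (fine (W1 q q')); rewrite fineK // ge0_fin_numE // ltey.
rewrite W1w -EFinD -EFinM lee_fin; apply/ler_addgt0Pr => eps eps0.
have /ereal_inf_lt[_ [pi pi_coupling <-] cost_lt] : (W1 q q' < (w + eps / C)%:E)%E.
  by rewrite W1w lte_fin ltrDl divr_gt0.
have cost_fin : (transport_cost pi < +oo)%E by apply: lt_le_trans cost_lt (leey _).
apply: le_trans (x_le pi pi_coupling cost_fin) _.
have -> : C * (a + w) + eps = C * (a + (w + eps / C)) by field; exact: lt0r_neq0.
rewrite ler_pM2l // lerD2l -lee_fin fineK ?ge0_fin_numE ?transport_cost_ge0 //.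
exact: ltW.
Qed.

End transport.

Section gradient.
Variables (R : realType) (dth dx : nat) (l : 'rV[R]_(dth + dx) -> R) (K : R).
Hypothesis K_gt0 : 0 < K.
Hypothesis l_lip : forall z z', enorm (grad l z - grad l z') <= K * enorm (z - z').

Lemma grad_coord_lipschitz z z' j :
  `|grad l z 0 j - grad l z' 0 j| <= K * l1norm (z - z').
Proof.
have := coord_le_enorm (grad l z - grad l z') j; rewrite !mxE => /le_trans; apply.
by apply: le_trans (l_lip z z') _; rewrite ler_pM2l // enorm_le_l1norm.
Qed.

Lemma l1norm_gradB z z' :
  l1norm (grad l z - grad l z') <= (dth + dx)%:R * K * l1norm (z - z').
Proof.
apply: le_trans (l1norm_le_enorm _) _; rewrite -mulrA ler_wpM2l //.
by apply: le_trans (l_lip z z') _; rewrite ler_pM2l // enorm_le_l1norm.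
Qed.

Definition grad_theta (th : 'rV[R]_dth) (i : 'I_dth) (z : Tx R dx) : R :=
  grad l (row_mx th z.1) 0 (lshift dx i).

Lemma gradF_coord th q i : gradF l th q 0 i = - \int[q]_z grad_theta th i z.
Proof. by rewrite !mxE; congr (- _); apply: eq_Rintegral => z _; rewrite mxE. Qed.

Lemma grad_theta_lipschitz_theta th th' i z :
  `|grad_theta th i z - grad_theta th' i z| <= K * l1norm (th - th').
Proof.
apply: le_trans (grad_coord_lipschitz _ _ _) _.
by rewrite opp_row_mx add_row_mx l1norm_row_mx subrr l1norm0 addr0.
Qed.

Lemma grad_theta_lipschitz th i z z' :
  `|grad_theta th i z - grad_theta th i z'| <= K * (dx + dx)%:R * enorm (pt z - pt z').
Proof.
apply: le_trans (grad_coord_lipschitz _ _ _) _.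
rewrite opp_row_mx add_row_mx l1norm_row_mx subrr l1norm0 add0r -mulrA ler_pM2l //.
apply: le_trans (l1norm_le_enorm _).
by rewrite /pt opp_row_mx add_row_mx l1norm_row_mx lerDl l1norm_ge0.
Qed.

Lemma measurable_grad_theta th i : measurable_fun setT (grad_theta th i).
Proof.
suff mx : measurable_fun setT (fun x => grad l (row_mx th x) 0 (lshift dx i)).
  exact: measurableT_comp mx measurable_fst.
apply: (l1norm_lipschitz_measurable (ltW K_gt0)) => x x'.
apply: le_trans (grad_coord_lipschitz _ _ _) _.
by rewrite opp_row_mx add_row_mx l1norm_row_mx subrr l1norm0 add0r.
Qed.

Lemma integrable_grad_theta th i q :
  P2 q -> q.-integrable setT (EFin \o grad_theta th i).
Proof.
move=> q_P2; have L0 : 0 <= K * (dx + dx)%:R := mulr_ge0 (ltW K_gt0) (ler0n _ _).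
set g0 := grad_theta th i (0, 0).
apply: (P2_integrable (c := `|g0|) q_P2 L0 (measurable_grad_theta th i)) => z.
have := grad_theta_lipschitz th i z (0, 0); rewrite [pt (0, 0)]row_mx0 subr0 => g_lip.
by rewrite -[grad_theta th i z](subrK g0) (le_trans (ler_normD _ _)) // addrC lerD2l.
Qed.

Lemma gradF_lipschitz th th' q q' (pi : probability (Tx R dx * Tx R dx)%type R) :
  P2 q -> P2 q' -> coupling q q' pi -> (transport_cost pi < +oo)%E ->
  l1norm (gradF l th q - gradF l th' q')
    <= dth%:R * K * (l1norm (th - th') + (dx + dx)%:R * fine (transport_cost pi)).
Proof.
move=> q_P2 q'_P2 pi_coupling cost_fin.
set w := fine (transport_cost pi).
have -> : dth%:R * K * (l1norm (th - th') + (dx + dx)%:R * w)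
    = \sum_(i < dth) (K * l1norm (th - th') + K * (dx + dx)%:R * w).
  by rewrite sumr_const card_ord -mulr_natl; ring.
apply: ler_sum => i _.
have -> : (gradF l th q - gradF l th' q') 0 i = gradF l th q 0 i - gradF l th' q' 0 i.
  by rewrite !mxE.
rewrite !gradF_coord.
set a := \int[q]_z _; set b := \int[q']_z _; set c := \int[q]_z grad_theta th' i z.
have ac : `|a - c| <= K * l1norm (th - th').
  have q_setT : fine (q setT) = 1 by rewrite probability_setT.
  rewrite -[X in _ <= X]mulr1 -q_setT -Rintegral_cst //.
  apply: le_normr_RintegralB.
  - exact: integrable_grad_theta.
  - exact: integrable_grad_theta.
  - exact: finite_measure_integrable_cst.
  - exact: grad_theta_lipschitz_theta.
have cb : `|c - b| <= K * (dx + dx)%:R * w.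
  apply: (lipschitz_Rintegral_coupling pi_coupling) => //.
  - exact: mulr_ge0 (ltW K_gt0) (ler0n _ _).
  - exact: integrable_grad_theta.
  - exact: integrable_grad_theta.
  - exact: grad_theta_lipschitz.
have -> : - a - - b = - ((a - c) + (c - b)) by ring.
by rewrite normrN (le_trans (ler_normD _ _)) // lerD.
Qed.

End gradient.

Section drift.
Variables (R : realType) (dth dx : nat) (l : 'rV[R]_(dth + dx) -> R) (K : R).
Variables (eta_th gam_th eta_x gam_x : R).
Hypotheses (K_gt0 : 0 < K) (eta_th_gt0 : 0 < eta_th) (gam_th_gt0 : 0 < gam_th)
  (eta_x_gt0 : 0 < eta_x) (gam_x_gt0 : 0 < gam_x).
Hypothesis l_lip : forall z z', enorm (grad l z - grad l z') <= K * enorm (z - z').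

(* Sum of the Lipschitz constants of the four blocks of the drift, with
   respect to l1 distances and the transport cost. *)
Definition drift_lipschitz_const : R :=
  eta_th + gam_th * eta_th + dth%:R * K * (1 + (dx + dx)%:R)
  + eta_x + gam_x * eta_x + (dth + dx)%:R * K.

Lemma drift_lipschitz_const_gt0 : 0 < drift_lipschitz_const.
Proof.
have := mulr_gt0 gam_th_gt0 eta_th_gt0; have := mulr_gt0 gam_x_gt0 eta_x_gt0.
have := mulr_ge0 (mulr_ge0 (ler0n R dth) (ltW K_gt0)) (addr_ge0 ler01 (ler0n R (dx + dx))).
have := mulr_ge0 (ler0n R (dth + dx)) (ltW K_gt0).
have := eta_th_gt0; have := eta_x_gt0.
by rewrite /drift_lipschitz_const => *; lra.
Qed.

Lemma l1norm_drift_thetaB c th th' m m' q q'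
    (pi : probability (Tx R dx * Tx R dx)%type R) :
  0 <= c -> P2 q -> P2 q' -> coupling q q' pi -> (transport_cost pi < +oo)%E ->
  l1norm ((- c *: m - gradF l th q) - (- c *: m' - gradF l th' q'))
    <= c * l1norm (m - m')
       + dth%:R * K * (l1norm (th - th') + (dx + dx)%:R * fine (transport_cost pi)).
Proof.
move=> c0 q_P2 q'_P2 pi_coupling cost_fin.
apply: le_trans (l1normDB _ _ _ _) _.
rewrite l1normZB normrN ger0_norm // -opprD l1normN lerD2l.
apply: (gradF_lipschitz K_gt0 l_lip th th' q_P2 q'_P2 pi_coupling cost_fin).
Qed.

Lemma l1norm_drift_xB c th th' (x x' u u' : 'rV[R]_dx) : 0 <= c ->
  l1norm ((- c *: u + rsubmx (grad l (row_mx th x)))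
          - (- c *: u' + rsubmx (grad l (row_mx th' x'))))
    <= c * l1norm (u - u') + (dth + dx)%:R * K * (l1norm (th - th') + l1norm (x - x')).
Proof.
move=> c0; apply: le_trans (l1normDB _ _ _ _) _.
rewrite l1normZB normrN ger0_norm // lerD2l -linearB /=.
apply: le_trans (l1norm_rsubmx _) _; apply: le_trans (l1norm_gradB K_gt0 l_lip _ _) _.
by rewrite opp_row_mx add_row_mx l1norm_row_mx.
Qed.

Lemma l1norm_driftB Y Y' V V' q q' (pi : probability (Tx R dx * Tx R dx)%type R) :
  P2 q -> P2 q' -> coupling q q' pi -> (transport_cost pi < +oo)%E ->
  l1norm (drift l eta_th gam_th eta_x gam_x Y V q
          - drift l eta_th gam_th eta_x gam_x Y' V' q')
    <= drift_lipschitz_const * (l1norm (pt V - pt V') + l1norm (pt Y - pt Y')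
                                + fine (transport_cost pi)).
Proof.
move=> q_P2 q'_P2 pi_coupling cost_fin.
have cth0 := mulr_gt0 gam_th_gt0 eta_th_gt0; have cx0 := mulr_gt0 gam_x_gt0 eta_x_gt0.
have B1 := l1normZB eta_th V.2 V'.2; have B3 := l1normZB eta_x Y.2 Y'.2.
have B2 := l1norm_drift_thetaB V.1 V'.1 V.2 V'.2 (ltW cth0) q_P2 q'_P2 pi_coupling cost_fin.
have B4 := l1norm_drift_xB V.1 V'.1 Y.1 Y'.1 Y.2 Y'.2 (ltW cx0).
rewrite /drift /pt !opp_row_mx !add_row_mx !l1norm_row_mx.
move: B1 B2 B3 B4; rewrite !gtr0_norm //.
have := l1norm_ge0 (V.1 - V'.1); have := l1norm_ge0 (V.2 - V'.2).
have := l1norm_ge0 (Y.1 - Y'.1); have := l1norm_ge0 (Y.2 - Y'.2).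
have := fine_ge0 (transport_cost_ge0 pi).
have dthK0 := mulr_ge0 (ler0n R dth) (ltW K_gt0); have := dthK0.
have := mulr_ge0 dthK0 (ler0n R (dx + dx)).
have := mulr_ge0 (ler0n R (dth + dx)) (ltW K_gt0).
have := eta_th_gt0; have := eta_x_gt0.
rewrite /drift_lipschitz_const => *; nra.
Qed.

Lemma enorm_driftB Y Y' V V' q q' (pi : probability (Tx R dx * Tx R dx)%type R) :
  P2 q -> P2 q' -> coupling q q' pi -> (transport_cost pi < +oo)%E ->
  enorm (drift l eta_th gam_th eta_x gam_x Y V q
         - drift l eta_th gam_th eta_x gam_x Y' V' q')
    <= drift_lipschitz_const * (dth + dth + dx + dx).+1%:R
       * (enorm (pt Y - pt Y') + enorm (pt V - pt V') + fine (transport_cost pi)).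
Proof.
move=> q_P2 q'_P2 pi_coupling cost_fin.
apply: le_trans (enorm_le_l1norm _) _.
apply: le_trans (l1norm_driftB Y Y' V V' q_P2 q'_P2 pi_coupling cost_fin) _.
rewrite -mulrA; apply: (ler_wpM2l (ltW drift_lipschitz_const_gt0)).
set N : R := _.+1%:R; set w := fine _.
have w0 : 0 <= w by apply: fine_ge0; exact: transport_cost_ge0.
have dim_le m (v : 'rV[R]_m) :
    (m <= (dth + dth + dx + dx).+1)%N -> l1norm v <= N * enorm v.
  move=> m_le; apply: le_trans (l1norm_le_enorm v) _.
  by apply: ler_wpM2r (enorm_ge0 v) _ _ _; rewrite ler_nat.
have := dim_le _ (pt V - pt V') ltac:(lia); have := dim_le _ (pt Y - pt Y') ltac:(lia).
have : w <= N * w by rewrite -[X in X <= _]mul1r; apply: ler_wpM2r w0 _ _ _; rewrite ler1n.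
by rewrite !mulrDr => *; lra.
Qed.

End drift.

Theorem propositionG2 (R : realType) (dth dx : nat)
  (l : 'rV[R]_(dth + dx) -> R)
  (l_diff : forall z : 'rV[R]_(dth + dx), differentiable l z)
  (K : R) (K_gt0 : 0 < K)
  (l_lip : forall z z' : 'rV[R]_(dth + dx),
      enorm (grad l z - grad l z') <= K * enorm (z - z'))
  (eta_th gam_th eta_x gam_x : R)
  (eta_th_gt0 : 0 < eta_th) (gam_th_gt0 : 0 < gam_th)
  (eta_x_gt0 : 0 < eta_x) (gam_x_gt0 : 0 < gam_x) :
  exists Kb : R, 0 < Kb /\
    forall (Y Y' : 'rV[R]_dx * 'rV[R]_dx) (V V' : 'rV[R]_dth * 'rV[R]_dth)
           (q q' : probability (Tx R dx) R),
      P2 q -> P2 q' ->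
      ((enorm (drift l eta_th gam_th eta_x gam_x Y V q
               - drift l eta_th gam_th eta_x gam_x Y' V' q'))%:E
       <= Kb%:E * ((enorm (pt Y - pt Y') + enorm (pt V - pt V'))%:E
                   + W1 q q'))%E.
Proof.
pose C := drift_lipschitz_const dth dx K eta_th gam_th eta_x gam_x.
have C_gt0 : 0 < C.
  exact: drift_lipschitz_const_gt0 K_gt0 eta_th_gt0 gam_th_gt0 eta_x_gt0 gam_x_gt0.
have Kb_gt0 := mulr_gt0 C_gt0 (ltr0Sn R (dth + dth + dx + dx)).
exists (C * (dth + dth + dx + dx).+1%:R); split=> // Y Y' V V' q q' q_P2 q'_P2.
apply: le_W1 => // pi pi_coupling cost_fin.
by have := enorm_driftB K_gt0 eta_th_gt0 gam_th_gt0 eta_x_gt0 gam_x_gt0 l_lip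
  Y Y' V V' q_P2 q'_P2 pi_coupling cost_fin.
Qed.
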